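(* Let $p$ be a prime such that $2$ is a generator of the multiplicative group $(\mathbb{Z}/p\mathbb{Z})^*$, and let $F_{mt}:\mathbb{F}_p^2\to\mathbb{F}_p^2$ be the map $F_{mt}(x,y)=(x^2y(x-y),\;2xy^2(x-y))$, where $\mathbb{F}_p=\mathbb{Z}/p\mathbb{Z}$. Then there exists $N\ge 1$ such that the $N$-th iterate $F_{mt}^{\circ N}$ sends every point of $\mathbb{F}_p^2$ to $(0,0)$.
   Context: $F_{mt}$ is the reduction modulo $p$ of the integer polynomial map $(x,y)\mapsto(x^2y(x-y),\,2xy^2(x-y))$ (called the ''multiplicative trap''); $F_{mt}^{\circ N}$ denotes its $N$-fold composition with itself. *)

From mathcomp Require Import all_boot all_order all_algebra.
Set Implicit Arguments. Unset Strict Implicit. Unset Printing Implicit Defensive.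
Import GRing.Theory.
Local Open Scope ring_scope.

Definition two_generates (p : nat) : Prop :=
  (2%:R : 'F_p) != 0 /\ forall x : 'F_p, x != 0 -> exists k : nat, x = 2%:R ^+ k.

Definition F_mt (p : nat) (v : 'F_p * 'F_p) : 'F_p * 'F_p :=
  let: (x, y) := v in
  (x ^+ 2 * y * (x - y), 2%:R * x * y ^+ 2 * (x - y)).

From mathcomp Require Import all_boot all_order all_algebra finfield.
From mathcomp Require Import ring.
Set Implicit Arguments. Unset Strict Implicit. Unset Printing Implicit Defensive.
Local Open Scope ring_scope.
Import GRing.Theory.

(* Away from the degenerate locus x y (x - y) = 0, F_mt multiplies the ratio
   y / x by 2, while on that locus it collapses to the fixed point (0, 0).
   Since 2 generates F_p^*, the inverse of any nonzero ratio is 2^k with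
   k < p - 1, so after k steps the ratio is 1 and one more step lands at
   (0, 0); hence N = p - 1 works for every point. *)

Section MultiplicativeTrap.

Variable p : nat.

Local Notation F := (F_mt (p:=p)).

Lemma F_mt_degenerate (x y : 'F_p) :
  [|| x == 0, y == 0 | x == y] -> F (x, y) = (0, 0).
Proof.
case/or3P=> /eqP->; rewrite /F_mt.
- by rewrite expr0n /= !(mul0r, mulr0).
- by rewrite expr0n /= !(mul0r, mulr0).
- by rewrite subrr !mulr0.
Qed.

Lemma iter_F_mt00 n : iter n F (0, 0) = (0, 0).
Proof. by elim: n => //= n ->; apply: F_mt_degenerate; rewrite eqxx. Qed.

Lemma iter_F_mt_absorb m n v :
  (m <= n)%N -> iter m F v = (0, 0) -> iter n F v = (0, 0).
Proof. by move=> /subnK <- hm; rewrite iterD hm iter_F_mt00. Qed.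

Lemma F_mt_ratio (x y : 'F_p) : x != y ->
  (F (x, y)).2 / (F (x, y)).1 = 2%:R * (y / x).
Proof.
move=> nxy.
have [->|hx] := eqVneq x 0; first by rewrite F_mt_degenerate ?eqxx // invr0 !mulr0.
have [->|hy] := eqVneq y 0; first by rewrite F_mt_degenerate ?eqxx ?orbT // !mul0r mulr0.
have hxy : x - y != 0 by rewrite subr_eq0.
by rewrite /F_mt /=; field; rewrite hx hy hxy.
Qed.

Lemma iter_F_mt_ratio1 n (x y : 'F_p) :
  y / x * 2%:R ^+ n = 1 -> iter n.+1 F (x, y) = (0, 0).
Proof.
elim: n x y => [|n IH] x y.
  rewrite expr0 mulr1 => ratio1; apply: F_mt_degenerate.
  have hx : x != 0.
    by apply: contraPneq ratio1 => ->; rewrite invr0 mulr0 => /esym/eqP; rewrite oner_eq0.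
  by rewrite -[y](divfK hx) ratio1 mul1r eqxx !orbT.
move=> ratio1; have [exy|nxy] := eqVneq x y.
  by rewrite iterSr F_mt_degenerate ?exy ?eqxx ?orbT // iter_F_mt00.
rewrite iterSr; case def_v: (F (x, y)) => [x' y']; apply: IH.
have := F_mt_ratio nxy; rewrite def_v /= => ->.
by rewrite -[RHS]ratio1 exprS; ring.
Qed.

Hypothesis p_prime : prime p.

Lemma expFp_pred_card (a : 'F_p) : a != 0 -> a ^+ p.-1 = 1.
Proof.
move=> a_neq0; apply: (mulfI a_neq0); have := expf_card a.
by rewrite card_Fp // mulr1 -exprS prednK ?prime_gt0.
Qed.

Lemma two_generates_lt (x : 'F_p) : two_generates p -> x != 0 ->
  exists2 k, (k < p.-1)%N & x = 2%:R ^+ k.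
Proof.
case=> two_neq0 two_gen /two_gen[k ->]; exists (k %% p.-1)%N.
  by rewrite ltn_mod -subn1 subn_gt0 prime_gt1.
by rewrite {1}(divn_eq k p.-1) exprD mulnC exprM expFp_pred_card // expr1n mul1r.
Qed.

End MultiplicativeTrap.

Theorem mainTheorem2 (p : nat) (hp : prime p) (h2 : two_generates p) :
  exists N : nat, (1 <= N)%N /\
    forall v : 'F_p * 'F_p, iter N (F_mt (p:=p)) v = (0, 0).
Proof.
have N_gt0 : (0 < p.-1)%N by rewrite -subn1 subn_gt0 prime_gt1.
exists p.-1; split=> // -[x y].
have [x0|hx] := eqVneq x 0.
  by apply: (iter_F_mt_absorb N_gt0); apply: F_mt_degenerate; rewrite x0 eqxx.
have [y0|hy] := eqVneq y 0.
  by apply: (iter_F_mt_absorb N_gt0); apply: F_mt_degenerate; rewrite y0 eqxx orbT.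
have [k lt_k_N k_inv] : exists2 k, (k < p.-1)%N & (y / x)^-1 = 2%:R ^+ k.
  by apply: two_generates_lt; rewrite ?invr_eq0 ?mulf_neq0 ?invr_eq0.
apply: (iter_F_mt_absorb lt_k_N); apply: iter_F_mt_ratio1.
by rewrite -k_inv mulfV // mulf_neq0 ?invr_eq0.
Qed.
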